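(* Let $V$ be a finite nonempty set and $f:\{0,1\}^V\to\{0,1\}^V$. (1) $f$ is positive-circular if and only if $f$ is an even-self-dual and-net. (2) $f$ is negative-circular if and only if $f$ is an odd-self-dual and-net.
   Context: For $x,y\in\{0,1\}^V$, $x\oplus y$ is componentwise addition mod 2, $1$ is the all-ones point, $\|x\|$ the number of $1$s; $x$ is even (odd) if $\|x\|$ is. The conjugate is $\tilde f(x)=f(x)\oplus x$. $f$ is self-dual if $f(x\oplus1)=f(x)\oplus1$ for all $x$; even (odd) if $\tilde f(\{0,1\}^V)$ is exactly the set of even (odd) points; even-self-dual (odd-self-dual) if both even (odd) and self-dual. For $x^{j\alpha}$ the point equal to $x$ except its $j$-component is $\alpha$, the global interaction graph $G(f)$ is the signed digraph on $V$ with a positive (resp. negative) arc from $j$ to $i$ iff $f_i(x^{j1})-f_i(x^{j0})=1$ (resp. $=-1$) for at least one $x$. $G(f)$ is simple if there is at most one arc from $j$ to $i$ for all $i,j$. $f$ is an and-net if $G(f)$ is simple and for every $i\in V$ and $x$: $f_i(x)=1$ iff $G(f)$ has no positive arc $j\to i$ with $x_j=0$ and no negative arc $j\to i$ with $x_j=1$. A cycle is a subgraph with at most one arc between any ordered pair whose underlying unsigned digraph is a directed cycle; positive (negative) if it has an even (odd) number of negative arcs. $f$ is positive-circular (negative-circular) if $G(f)$ itself is a positive (negative) cycle through all vertices of $V$. *)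

From mathcomp Require Import all_boot.
Set Implicit Arguments. Unset Strict Implicit. Unset Printing Implicit Defensive.

Section BN.
Variable V : finType.
Notation point := {ffun V -> bool}.

Definition pxor (x y : point) : point := [ffun i => x i (+) y i].
Definition ones : point := [ffun => true].
Definition weight (x : point) : nat := #|[set i | x i]|.
Definition even_point (x : point) : bool := ~~ odd (weight x).
Definition odd_point (x : point) : bool := odd (weight x).

Definition upd (x : point) (j : V) (a : bool) : point :=
  [ffun i => if i == j then a else x i].

Variable f : point -> point.

Definition conjugate (x : point) : point := pxor (f x) x.

Definition self_dual : Prop := forall x, f (pxor x ones) = pxor (f x) ones.

Definition even_net : Prop :=
  forall y : point, (exists x, conjugate x = y) <-> even_point y.
Definition odd_net : Prop :=
  forall y : point, (exists x, conjugate x = y) <-> odd_point y.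

Definition even_self_dual : Prop := even_net /\ self_dual.
Definition odd_self_dual : Prop := odd_net /\ self_dual.

Definition pos_arc (j i : V) : Prop :=
  exists x, f (upd x j true) i = true /\ f (upd x j false) i = false.
Definition neg_arc (j i : V) : Prop :=
  exists x, f (upd x j true) i = false /\ f (upd x j false) i = true.
Definition arc (j i : V) : Prop := pos_arc j i \/ neg_arc j i.

Definition simple_graph : Prop := forall i j, ~ (pos_arc j i /\ neg_arc j i).

Definition and_net : Prop :=
  simple_graph /\
  forall (i : V) (x : point),
    f x i = true <->
    ((forall j, pos_arc j i -> x j = true) /\ (forall j, neg_arc j i -> x j = false)).

(* The sign parity of the
   cycle is the parity of the number of negative arcs. *)
Definition hamiltonian_cycle_graph (s : seq V) : Prop :=
  simple_graph /\ uniq s /\ (forall v, v \in s) /\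
  (forall j i, arc j i <-> i = next s j).

Definition neg_arc_tails (s : seq V) (N : {set V}) : Prop :=
  forall j, j \in N <-> neg_arc j (next s j).

Definition positive_circular : Prop :=
  exists (s : seq V) (N : {set V}),
    hamiltonian_cycle_graph s /\ neg_arc_tails s N /\ ~~ odd #|N|.
Definition negative_circular : Prop :=
  exists (s : seq V) (N : {set V}),
    hamiltonian_cycle_graph s /\ neg_arc_tails s N /\ odd #|N|.
End BN.

From Pilot Require Import Defs.
From mathcomp Require Import all_boot.
From Stdlib Require Setoid.
Set Implicit Arguments. Unset Strict Implicit. Unset Printing Implicit Defensive.

(* Both sides say that f_i(x) = x_(p i) xor b_i for a cyclic permutation p of V.
   In an and-net each arc j -> i forces f_i = 0 on a half-cube {x | x_j = a}.  Self-duality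
   rules out a constant f_i, and also two in-arcs of i, since their half-cubes contain a
   pair of complementary points; so every i has exactly one in-neighbour p i, and f has
   the shape above with b = f 0.  For such f the conjugate x o p xor b xor x has the parity
   of b on every p-invariant set of vertices, so if the conjugate hits a whole parity class,
   p must be a permutation with a single orbit.  Conversely, when p is a single cycle,
   x o p xor x = y xor b is solved by summing y xor b along the cycle.  The negative arcs
   of the cycle are the arcs p i -> i with b_i = 1, so their number has the parity of b. *)

Section BooleanNetworks.
Variable V : finType.
Notation point := {ffun V -> bool}.

Definition zero : point := [ffun => false].
Definition basis (j : V) : point := [ffun v => v == j].
Definition parity (P : pred V) (z : point) : bool := \big[addb/false]_(i | P i) z i.

Lemma parity_pxor P (x y : point) : parity P (pxor x y) = parity P x (+) parity P y.
Proof. by rewrite /parity -big_split; apply: eq_bigr => i _; rewrite ffunE. Qed.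

Lemma parity_basis P j : parity P (basis j) = P j.
Proof.
rewrite /parity; case Pj: (P j).
- rewrite (bigD1 j) //= ffunE eqxx big1 // => i /andP[_ ij].
  by rewrite ffunE (negbTE ij).
- rewrite big1 // => i Pi; rewrite ffunE; apply/negbTE.
  by apply: contraTneq Pi => ->; rewrite Pj.
Qed.

Lemma parity_comp P (g : V -> V) (z : point) : injective g -> (forall i, P (g i) = P i) ->
  parity P [ffun i => z (g i)] = parity P z.
Proof.
move=> g_inj Pg; rewrite /parity [RHS](reindex_inj g_inj) /=.
by apply: eq_big => i; rewrite ?Pg // ffunE.
Qed.

Lemma parity_exists P (z : point) : parity P z -> exists2 i, P i & z i.
Proof.
move=> Pz; apply/exists_inP; apply: contraLR Pz => /exists_inPn z0.
by rewrite /parity big1 // => i /z0/negbTE.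
Qed.

Lemma odd_weight (z : point) : odd (weight z) = parity predT z.
Proof.
rewrite /weight -sum1_card big_mkcond (big_morph odd oddD (erefl (odd 0))).
by apply: eq_bigr => i _; rewrite inE; case: (z i).
Qed.

Lemma odd_card_comp (g : V -> V) (z : point) : injective g ->
  odd #|[set j | z (g j)]| = parity predT z.
Proof.
move=> g_inj; rewrite -(parity_comp _ g_inj) // -odd_weight /weight.
by congr (odd _); apply: eq_card => j; rewrite !inE ffunE.
Qed.

Lemma fin_surj_bij (g : V -> V) : (forall j, exists i, g i = j) ->
  exists2 h : V -> V, cancel g h & cancel h g.
Proof.
move=> g_surj; pose h j := odflt j [pick i | g i == j].
have hK : cancel h g.
  move=> j; rewrite /h; case: pickP => [i /eqP //| no_pre].
  by have [i gi] := g_surj j; move: (no_pre i); rewrite gi eqxx.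
have [h' h'K Kh'] := injF_bij (can_inj hK).
by exists h => // i; rewrite -(Kh' i) hK.
Qed.

Section SingleOrbit.
Variables (q : V -> V) (v0 : V).
Hypothesis q_orbit : forall v, fconnect q v0 v.

Lemma parity_orbit (c : point) :
  \big[addb/false]_(m < order q v0) c (iter m q v0) = parity predT c.
Proof.
rewrite /parity (eq_bigl (fun v => v \in orbit q v0)) => [|v]; last first.
  by rewrite -fconnect_orbit q_orbit.
rewrite -big_uniq ?orbit_uniq // (big_nth v0) size_orbit big_mkord.
by apply: eq_bigr => m _; rewrite nth_traject.
Qed.

Hypothesis q_inj : injective q.

Lemma next_orbit : next (orbit q v0) =1 q.
Proof. by move=> v; rewrite (nextE (cycle_orbit q_inj v0)) // -fconnect_orbit. Qed.

(* x_v is the xor of c along the cycle from [q v0] up to v; the total vanishes, so the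
   recursion closes up when the cycle returns to v0. *)
Lemma cyclic_coboundary (c : point) : parity predT c = false ->
  exists x : point, forall j, x (q j) = x j (+) c (q j).
Proof.
move=> c_even.
exists [ffun v => \big[addb/false]_(m < findex q v0 v) c (iter m.+1 q v0)] => j.
have j_iter : iter (findex q v0 j) q v0 = j := iter_findex (q_orbit j).
have := findex_max (q_orbit j); rewrite leq_eqVlt => /orP[/eqP last_j | lt_j].
- have qj_v0 : q j = v0 by rewrite -j_iter -iterS last_j iter_order.
  rewrite !ffunE qj_v0 findex0 big_ord0.
  have := parity_orbit c; rewrite c_even -last_j big_ord_recl => total.
  by apply/esym; rewrite addbC; exact: total.
- have qj_iter : q j = iter (findex q v0 j).+1 q v0 by rewrite iterS j_iter.
  by rewrite !ffunE qj_iter findex_iter // big_ord_recr.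
Qed.

End SingleOrbit.

Lemma neg_arc_tails_unique (f : point -> point) s N N' :
  neg_arc_tails f s N -> neg_arc_tails f s N' -> N = N'.
Proof.
by move=> tN tN'; apply/setP => j; apply/idP/idP => [/(tN j)/(tN' j) | /(tN' j)/(tN j)].
Qed.

Variable f : point -> point.

Definition parity_net (sgn : bool) : Prop :=
  forall y, (exists x, conjugate f x = y) <-> odd (weight y) == sgn.

Definition circular (sgn : bool) : Prop :=
  exists s N, hamiltonian_cycle_graph f s /\ neg_arc_tails f s N /\ odd #|N| == sgn.

Lemma even_net_parity : even_net f <-> parity_net false.
Proof. by split=> net y; move: (net y); rewrite /even_point eqbF_neg. Qed.

Lemma odd_net_parity : odd_net f <-> parity_net true.
Proof. by split=> net y; move: (net y); rewrite /odd_point eqb_id. Qed.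

Lemma positive_circular_parity : positive_circular f <-> circular false.
Proof. by split=> -[s [N [? [? N_odd]]]]; exists s, N; rewrite ?eqbF_neg in N_odd *. Qed.

Lemma negative_circular_parity : negative_circular f <-> circular true.
Proof. by split=> -[s [N [? [? N_odd]]]]; exists s, N; rewrite ?eqb_id in N_odd *. Qed.

Lemma parity_conjugate_net sgn x : parity_net sgn -> parity predT (conjugate f x) = sgn.
Proof. by move=> net; apply/eqP; rewrite -odd_weight; apply/net; exists x. Qed.

Section Shift.
Variables (p : V -> V) (b : point).
Hypothesis fE : forall x i, f x i = x (p i) (+) b i.

Lemma shift_pos_arc j i : pos_arc f j i <-> j = p i /\ b i = false.
Proof.
split=> [[x []] | [-> bi]]; last by exists zero; rewrite !fE !ffunE eqxx bi.
rewrite !fE !ffunE; case: (p i =P j) => [<- | _ -> //]; by case: (b i).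
Qed.

Lemma shift_neg_arc j i : neg_arc f j i <-> j = p i /\ b i = true.
Proof.
split=> [[x []] | [-> bi]]; last by exists zero; rewrite !fE !ffunE eqxx bi.
rewrite !fE !ffunE; case: (p i =P j) => [<- | _ -> //]; by case: (b i).
Qed.

Lemma shift_arc j i : Defs.arc f j i <-> j = p i.
Proof.
split=> [[/shift_pos_arc | /shift_neg_arc] [] // | ->].
by case bi: (b i); [right; apply/shift_neg_arc | left; apply/shift_pos_arc].
Qed.

Lemma shift_simple : simple_graph f.
Proof. by move=> i j [/shift_pos_arc [_ bi] /shift_neg_arc [_]]; rewrite bi. Qed.

Lemma shift_and_net : and_net f.
Proof.
split=> [|i x]; first exact: shift_simple.
rewrite fE; split=> [fxi | [pos neg]].
- by split=> j; [move/shift_pos_arc | move/shift_neg_arc] => -[-> bi];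
    move: fxi; rewrite bi; case: (x (p i)).
- case bi: (b i); first by rewrite (neg (p i)) //; apply/shift_neg_arc.
  by rewrite (pos (p i)) //; apply/shift_pos_arc.
Qed.

Lemma shift_self_dual : self_dual f.
Proof. by move=> x; apply/ffunP => i; rewrite !ffunE !fE !ffunE addbAC. Qed.

Lemma shift_conjugateE x : conjugate f x = pxor (pxor [ffun i => x (p i)] b) x.
Proof. by apply/ffunP => i; rewrite !ffunE fE. Qed.

Lemma parity_shift_conjugate P x : injective p -> (forall i, P (p i) = P i) ->
  parity P (conjugate f x) = parity P b.
Proof.
move=> p_inj Pp; rewrite shift_conjugateE !parity_pxor parity_comp //.
by rewrite addbAC addbb.
Qed.

Lemma shift_neg_arc_tails s : cancel (next s) p -> neg_arc_tails f s [set j | b (next s j)].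
Proof. by move=> nextK j; rewrite inE shift_neg_arc nextK; split=> [|[]]. Qed.

Lemma shift_parity_net q v0 : cancel p q -> cancel q p ->
  (forall v, fconnect q v0 v) -> parity_net (parity predT b).
Proof.
move=> pK qK q_orbit y; split=> [[x <-] | y_par].
  by rewrite odd_weight (parity_shift_conjugate _ (can_inj pK)).
have yb_even : parity predT (pxor y b) = false.
  by rewrite parity_pxor -odd_weight (eqP y_par) addbb.
have [x xK] := cyclic_coboundary q_orbit (can_inj qK) yb_even.
exists x; apply/ffunP => i; move: (xK (p i)); rewrite pK !ffunE fE => ->.
by case: (x (p i)); case: (b i); case: (y i).
Qed.

Section ParityNet.
Variable sgn : bool.
Hypothesis f_net : parity_net sgn.

Lemma shift_net_parity : parity predT b = sgn.
Proof.
rewrite -(parity_conjugate_net zero f_net) shift_conjugateE.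
by congr (parity _ _); apply/ffunP => i; rewrite !ffunE addbF.
Qed.

(* The conjugate of [basis j] is [basis j o p + b + basis j] and has parity sgn. *)
Lemma shift_net_surj j : exists i, p i = j.
Proof.
have := parity_conjugate_net (basis j) f_net.
rewrite shift_conjugateE !parity_pxor shift_net_parity parity_basis addbT.
case: (boolP (parity predT [ffun i => basis j (p i)])) => [/parity_exists [i _] | _].
  by rewrite !ffunE => /eqP pij _; exists i.
by case: sgn.
Qed.

(* If v0 and v were in different q-orbits, [b + basis v0 + basis v] would be a conjugate
   whose parity on the orbit of v0 differs from that of b. *)
Lemma shift_net_single_orbit q v0 : cancel p q -> cancel q p -> forall v, fconnect q v0 v.
Proof.
move=> pK qK v; apply: contraT => v_out.
pose C := fconnect q v0.
have Cp i : C (p i) = C i by rewrite /C (same_fconnect1_r (can_inj qK)) pK.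
have [x xE] : exists x, conjugate f x = pxor b (pxor (basis v0) (basis v)).
  apply/f_net; rewrite odd_weight !parity_pxor !parity_basis shift_net_parity.
  by case: sgn.
have := parity_shift_conjugate x (can_inj pK) Cp.
by rewrite xE !parity_pxor !parity_basis /C connect0 (negbTE v_out); case: (parity _ b).
Qed.

End ParityNet.
End Shift.

Lemma f_upd_non_arc j i : ~ Defs.arc f j i -> forall x a, f (upd x j a) i = f x i.
Proof.
move=> no_arc x a.
have upd_eq : f (upd x j true) i = f (upd x j false) i.
  case e1: (f (upd x j true) i); case e2: (f (upd x j false) i) => //;
    case: no_arc; [left | right]; by exists x.
have upd_id : upd x j (x j) = x by apply/ffunP => v; rewrite ffunE; case: eqP => [->|].
by rewrite -{2}upd_id; case: a; case: (x j).
Qed.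

Lemma f_eq_on_unique_source i k : (forall j, j != k -> ~ Defs.arc f j i) ->
  forall x y : point, x k = y k -> f x i = f y i.
Proof.
move=> no_arc x y xy_k.
suff agree (l : seq V) : forall x' : point, x' k = y k ->
  (forall j, j \notin l -> x' j = y j) -> f x' i = f y i.
  by apply: (agree (enum V)) => // j; rewrite mem_enum.
elim: l => [|j l IHl] x' x'y_k x'y; first by congr (f _ i); apply/ffunP => v; apply: x'y.
have [jk | jk] := eqVneq j k.
  subst k; apply: IHl => // v vl.
  by have [-> // | vj] := eqVneq v j; rewrite x'y // inE negb_or vj.
rewrite -(f_upd_non_arc (no_arc _ jk) x' (y j)); apply: IHl => [|v vl].
  by rewrite ffunE eq_sym (negbTE jk).
by rewrite ffunE; case: eqP => [-> // | /eqP vj]; rewrite x'y // inE negb_or vj.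
Qed.

Lemma shift_of_arcs (p : V -> V) : (forall j i, Defs.arc f j i <-> j = p i) ->
  forall x i, f x i = x (p i) (+) f zero i.
Proof.
move=> arcE x i.
have fp : forall y z : point, y (p i) = z (p i) -> f y i = f z i.
  by apply: f_eq_on_unique_source => j /eqP jp /arcE.
have zero_upd : upd zero (p i) false = zero by apply/ffunP => v; rewrite !ffunE; case: ifP.
have [x' flip] : exists x', f (upd x' (p i) true) i != f (upd x' (p i) false) i.
  by case: (iffRL (arcE (p i) i) erefl) => -[x' [e1 e0]]; exists x'; rewrite e1 e0.
have e1 : f (upd x' (p i) true) i = f (upd zero (p i) true) i.
  by apply: fp; rewrite !ffunE eqxx.
have e0 : f (upd x' (p i) false) i = f zero i.
  by rewrite -zero_upd; apply: fp; rewrite !ffunE eqxx.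
rewrite (fp x (upd zero (p i) (x (p i)))) ?ffunE ?eqxx //; move: flip; rewrite e1 e0.
by case: (x (p i)); [case: (f _ i); case: (f zero i) | rewrite zero_upd].
Qed.

Definition arcb (j i : V) : bool := [exists x, f (upd x j true) i != f (upd x j false) i].

Lemma arcP j i : reflect (Defs.arc f j i) (arcb j i).
Proof.
apply: (iffP existsP) => [[x] | [[x [e1 e2]] | [x [e1 e2]]]]; last 2 first.
- by exists x; rewrite e1 e2.
- by exists x; rewrite e1 e2.
case e1: (f (upd x j true) i); case e2: (f (upd x j false) i) => // _;
  [left | right]; by exists x.
Qed.

Section AndNet.
Hypotheses (f_sd : self_dual f) (f_and : and_net f).

Lemma and_net_arc_blocks j i :
  Defs.arc f j i -> exists a, forall x : point, x j = a -> f x i = false.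
Proof.
case: f_and => _ fE [pa | na]; [exists false | exists true] => x xj;
  apply/negbTE/negP => /fE [pos neg].
- by move: (pos j pa); rewrite xj.
- by move: (neg j na); rewrite xj.
Qed.

Lemma self_dual_and_net_in_arc i : exists j, Defs.arc f j i.
Proof.
case: (pickP (arcb^~ i)) => [j /arcP | no_arc]; first by exists j.
have f_true x : f x i.
  apply/f_and.2; split=> j arc_ji; move/negP: (negbT (no_arc j)); case; apply/arcP;
    [left | right]; exact: arc_ji.
by have := congr1 (fun y : point => y i) (f_sd zero); rewrite /= !ffunE !f_true.
Qed.

Lemma self_dual_and_net_arc_unique i j1 j2 : Defs.arc f j1 i -> Defs.arc f j2 i -> j1 = j2.
Proof.
move=> a1 a2; apply/eqP/negPn/negP => ne.
have [[c1 k1] [c2 k2]] := (and_net_arc_blocks a1, and_net_arc_blocks a2).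
pose x : point := [ffun v => if v == j1 then ~~ c1 else c2].
have fx : f x i = false by apply: k2; rewrite ffunE eq_sym (negbTE ne).
have fx1 : f (pxor x (ones V)) i = false by apply: k1; rewrite !ffunE eqxx addbT negbK.
by have := congr1 (fun y : point => y i) (f_sd x); rewrite /= fx1 !ffunE fx.
Qed.

Lemma self_dual_and_net_shift : exists p, forall x i, f x i = x (p i) (+) f zero i.
Proof.
pose p i := odflt i [pick j | arcb j i].
have p_arc i : Defs.arc f (p i) i.
  rewrite /p; case: pickP => [j /arcP // | no_arc].
  by have [j /arcP] := self_dual_and_net_in_arc i; rewrite no_arc.
exists p; apply: shift_of_arcs => j i.
by split=> [/self_dual_and_net_arc_unique/(_ (p_arc i)) | ->].
Qed.

End AndNet.

Lemma hamiltonian_shift s : hamiltonian_cycle_graph f s ->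
  forall x i, f x i = x (prev s i) (+) f zero i.
Proof.
case=> _ [s_uniq [_ s_arc]]; apply: shift_of_arcs => j i.
by rewrite s_arc; split=> [-> | ->]; rewrite ?prev_next ?next_prev.
Qed.

Lemma circular_iff (v0 : V) sgn :
  circular sgn <-> (parity_net sgn /\ self_dual f) /\ and_net f.
Proof.
split=> [[s [N [s_ham [N_tails N_odd]]]] | [[f_net f_sd] f_and]].
- have [_ [s_uniq [s_full _]]] := s_ham.
  have fE := hamiltonian_shift s_ham.
  have N_def := neg_arc_tails_unique (shift_neg_arc_tails fE (prev_next s_uniq)) N_tails.
  move: N_odd; rewrite -N_def (odd_card_comp _ (can_inj (prev_next s_uniq))) => /eqP <-.
  split; last exact: shift_and_net fE.
  split; last exact: shift_self_dual fE.
  apply: (shift_parity_net fE (next_prev s_uniq) (prev_next s_uniq) (v0 := v0)) => v.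
  by rewrite (fconnect_cycle (cycle_next s_uniq) (s_full v0)).
- have [p fE] := self_dual_and_net_shift f_sd f_and.
  have [q pK qK] := fin_surj_bij (shift_net_surj fE f_net).
  have q_orbit := shift_net_single_orbit fE f_net v0 pK qK.
  have nextE := next_orbit q_orbit (can_inj qK).
  have nextK : cancel (next (orbit q v0)) p by move=> j; rewrite nextE qK.
  exists (orbit q v0), [set j | f zero (next (orbit q v0) j)].
  split; [split; [exact: shift_simple fE | split; [exact: orbit_uniq | split]] | split].
  + by move=> v; rewrite -fconnect_orbit.
  + by move=> j i; rewrite (shift_arc fE) nextE; split=> ->; rewrite ?qK ?pK.
  + by have := shift_neg_arc_tails fE nextK.
  + by rewrite (odd_card_comp _ (can_inj nextK)) (shift_net_parity fE f_net).
Qed.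

End BooleanNetworks.

Theorem proposition6 (V : finType) (hV : 0 < #|V|)
  (f : {ffun V -> bool} -> {ffun V -> bool}) :
  (positive_circular f <-> even_self_dual f /\ and_net f) /\
  (negative_circular f <-> odd_self_dual f /\ and_net f).
Proof.
have [v0 _] := card_gt0P hV.
rewrite /even_self_dual /odd_self_dual even_net_parity odd_net_parity.
by rewrite positive_circular_parity negative_circular_parity !(circular_iff _ v0).
Qed.
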